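(* Let $\Gamma\subset\mathbf{Z}^n$ be an almost periodic pattern. Then the mean of $\rho_\Gamma$ equals $D(\Gamma)$: for every $\varepsilon>0$ there exists $R_0>0$ such that for every $R\ge R_0$ and every $x\in\mathbf{R}^n$, $\left|D(\Gamma)-\frac{1}{\operatorname{Card}[B(x,R)]}\sum_{v\in[B(x,R)]}\rho_\Gamma(v)\right|<\varepsilon.$
   Context: Balls are for the sup norm: $B(x,R)=\{y:\max_i|x_i-y_i|<R\}$, $B_R=B(0,R)$, $[B]=B\cap\mathbf{Z}^n$. Relatively dense: there is $R_0>0$ such that every ball of radius at least $R_0$ meets the set; uniformly discrete: there is $r>0$ such that every ball of radius at most $r$ contains at most one point; Delone: both. $D_R^+(\Gamma)=\sup_{x\in\mathbf{R}^n}\frac{\operatorname{Card}(B(x,R)\cap\Gamma)}{\operatorname{Card}(B(x,R)\cap\mathbf{Z}^n)}$. A Delone set $\Gamma\subset\mathbf{Z}^n$ is an almost periodic pattern if for every $\varepsilon>0$ there exist $R_\varepsilon>0$ and a relatively dense set $\mathcal N_\varepsilon$ with $D_R^+((\Gamma+v)\Delta\Gamma)<\varepsilon$ for all $R\ge R_\varepsilon$, $v\in\mathcal N_\varepsilon$. The density of $A\subset\mathbf{Z}^n$ is $D(A)=\lim_{R\to\infty}\operatorname{Card}(A\cap[B_R])/\operatorname{Card}[B_R]$ (the paper uses that these densities exist for the sets considered). For $v\in\mathbf{Z}^n$, $\rho_\Gamma(v)=\frac{D(\Gamma\cap(\Gamma-v))}{D(\Gamma)}$. *)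

From HB Require Import structures.
From mathcomp Require Import all_boot all_order all_algebra.
From mathcomp Require Import all_classical all_reals all_analysis.
Set Implicit Arguments. Unset Strict Implicit. Unset Printing Implicit Defensive.
Import Order.TTheory GRing.Theory Num.Theory.
Import numFieldNormedType.Exports.
Local Open Scope classical_set_scope.
Local Open Scope ring_scope.

Section AP.
Variables (R : realType) (n : nat).

(* [B(x,r)] = integer points of the open sup-norm ball of center x, radius r *)
Definition ZB (x : 'rV[R]_n) (r : R) : set 'rV[int]_n :=
  [set v | forall i : 'I_n, `|x ord0 i - (v ord0 i)%:~R| < r].

Definition cardZ (A : set 'rV[int]_n) : nat := (\sum_(v \in A) 1)%N.

Definition translate (A : set 'rV[int]_n) (v : 'rV[int]_n) : set 'rV[int]_n :=
  [set g + v | g in A].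

Definition symdiff (A B : set 'rV[int]_n) : set 'rV[int]_n :=
  (A `\` B) `|` (B `\` A).

Definition rel_dense (A : set 'rV[int]_n) : Prop :=
  exists R0 : R, 0 < R0 /\
    forall (x : 'rV[R]_n) (r : R), R0 <= r -> exists v, A v /\ ZB x r v.

Definition unif_discrete (A : set 'rV[int]_n) : Prop :=
  exists r0 : R, 0 < r0 /\
    forall (x : 'rV[R]_n) (r : R), r <= r0 ->
      forall u v, A u -> ZB x r u -> A v -> ZB x r v -> u = v.

Definition Delone (A : set 'rV[int]_n) : Prop := rel_dense A /\ unif_discrete A.

Definition Dplus (A : set 'rV[int]_n) (r : R) : R :=
  sup [set (cardZ (A `&` ZB x r))%:R / (cardZ (ZB x r))%:R | x in [set: 'rV[R]_n]].

Definition almost_periodic (G : set 'rV[int]_n) : Prop :=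
  Delone G /\
  forall eps : R, 0 < eps ->
    exists Reps : R, 0 < Reps /\
    exists N : set 'rV[int]_n, rel_dense N /\
      forall (r : R) (v : 'rV[int]_n), Reps <= r -> N v ->
        Dplus (symdiff (translate G v) G) r < eps.

Definition dens (A : set 'rV[int]_n) : R :=
  lim ((fun r : R => ((cardZ (A `&` ZB 0 r))%:R / (cardZ (ZB 0 r))%:R : R)) @ +oo%R).

Definition rho (G : set 'rV[int]_n) (v : 'rV[int]_n) : R :=
  dens (G `&` translate G (- v)) / dens G.

End AP.

(* Almost periodicity makes [G] uniformly dense: counts in large cubes change
   little under translation by an almost period, and averaging over a cube of
   cubes turns this into a Cauchy criterion for the density ratios, uniformly
   in the centre of the cube, hence of any large ball; the limit is [dens G].
   Each [G ∩ (G - v)] is again almost periodic, hence uniformly dense too.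
   Counting the pairs [(y, y + v)] of points of [G] with [y] in a large ball
   [B_s] and [v] in [B(x, r)] gives
     sum_v #(G ∩ (G - v) ∩ B_s) = sum_(y ∈ G ∩ B_s) #(G ∩ B(x + y, r)),
   whose left side is about [#B_s · sum_v dens (G ∩ (G - v))] and whose right
   side is about [d #B_s · d #B(x, r)], with [d = dens G]; dividing by
   [d #B_s #B(x, r)] gives the mean of [rho G] over [B(x, r)]. *)

From HB Require Import structures.
From mathcomp Require Import all_boot all_order all_algebra.
From mathcomp Require Import all_classical all_reals all_analysis.
From mathcomp Require Import zify ring lra.
Set Implicit Arguments. Unset Strict Implicit. Unset Printing Implicit Defensive.
Import Order.TTheory GRing.Theory Num.Theory.
Import numFieldNormedType.Exports.
Local Open Scope classical_set_scope.
Local Open Scope ring_scope.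

Lemma expr1D_le (F : realFieldType) (t : F) (m : nat) : 0 <= t -> t <= 1 ->
  (1 + t) ^+ m <= 1 + t * (2 ^+ m - 1).
Proof.
move=> t0 t1; elim: m => [|m IHm]; first by rewrite !expr0; lra.
have ge1 : 1 <= (2 : F) ^+ m by rewrite exprn_ege1 //; lra.
rewrite !exprS; apply: (le_trans (ler_wpM2l _ IHm)); first lra.
have : 0 <= (t - t * t) * (2 ^+ m - 1) by apply: mulr_ge0; nra.
nra.
Qed.

Lemma expr_shift_le (F : realFieldType) (a b eta : F) (m : nat) :
  0 < a -> 0 <= b -> b <= a -> b * 2 ^+ m <= eta * a ->
  (a + b) ^+ m <= (1 + eta) * a ^+ m.
Proof.
move=> a0 b0 ba bm.
have -> : a + b = a * (1 + b / a) by rewrite mulrDr mulr1 mulrCA divff ?gt_eqF ?mulr1.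
rewrite exprMn mulrC ler_pM2r ?exprn_gt0 //.
have t0 : 0 <= b / a by rewrite divr_ge0 // ltW.
have t1 : b / a <= 1 by rewrite ler_pdivrMr // mul1r.
apply/(le_trans (expr1D_le m t0 t1)).
have p1 : 1 <= (2 : F) ^+ m by rewrite exprn_ege1 //; lra.
have : b / a * 2 ^+ m <= eta by rewrite mulrAC ler_pdivrMr.
move: (b / a) t0 => t t0; move: (2 ^+ m : F) p1 => p p1; nra.
Qed.

Lemma le_of_forall_mul_gt0 (F : realFieldType) (x y K : F) : 0 <= K ->
  (forall rho, 0 < rho -> x <= y + rho * K) -> x <= y.
Proof.
move=> K0 H; apply/ler_addgt0Pr => e e0.
have K1 : 0 < K + 1 by lra.
apply: (le_trans (H (e / (K + 1)) (divr_gt0 e0 K1))); rewrite lerD2l.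
by rewrite mulrAC ler_pdivrMr // ler_pM2l //; lra.
Qed.

Lemma scaled_sandwich_dist_le (F : realFieldType) (f a e V Vm Vp : F) :
  0 <= a <= 1 -> 0 <= e <= 1 -> 0 <= Vm -> Vm <= V ->
  V <= (1 + e) * Vm -> Vp <= (1 + e) * V ->
  f <= Vp * (a + e) -> Vm * (a - e) <= f -> `|f - a * V| <= 3 * e * V.
Proof.
move=> /andP[a0 a1] /andP[e0 e1] Vm0 VmV VVm VpV fhi flo.
have V0 : 0 <= V by apply: le_trans VmV.
have hi : Vp * (a + e) <= (1 + e) * V * (a + e) by apply: ler_wpM2r => //; lra.
have Vm_lo : (1 - e) * V <= Vm.
  have : (1 - e) * V <= (1 - e) * ((1 + e) * Vm) by apply: ler_wpM2l; lra.
  have : 0 <= e * e * Vm by rewrite !mulr_ge0.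
  nra.
have lo : (1 - e) * V * a <= Vm * a by apply: ler_wpM2r.
have : e * Vm <= e * V by apply: ler_wpM2l.
have : 0 <= e * a * V by rewrite !mulr_ge0.
have : e * e * V <= e * V by rewrite -!mulrA ler_wpM2l // ler_piMl.
have : e * a * V <= e * V by rewrite -!mulrA ler_wpM2l // ler_piMl.
move=> *; rewrite ler_norml; apply/andP; split; nra.
Qed.

Lemma sandwich_dist_le (F : realFieldType) (f c g1 g2 lo hi d e : F) :
  0 <= d <= 1 -> 0 <= e <= 1 -> 0 < lo -> lo <= c -> c <= hi -> hi <= (1 + e) * lo ->
  g1 <= f -> f <= g2 -> `|g1 - d * lo| <= e * lo -> `|g2 - d * hi| <= e * hi ->
  `|f - d * c| <= 3 * e * c.
Proof.
move=> /andP[d0 d1] /andP[e0 e1] lo0 loc chi hilo g1f fg2.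
rewrite !ler_norml => /andP[g1lo _] /andP[_ g2hi].
have dc : d * lo <= d * c by apply: ler_wpM2l.
have dc' : d * c <= d * hi by apply: ler_wpM2l.
have ec : e * lo <= e * c by apply: ler_wpM2l.
have : e * hi <= e * ((1 + e) * lo) by apply: ler_wpM2l.
have : d * hi <= d * ((1 + e) * lo) by apply: ler_wpM2l.
have : e * (d * lo) <= e * lo by rewrite ler_wpM2l // ler_piMl // ltW.
have : e * (e * lo) <= e * lo by rewrite ler_wpM2l // ler_piMl // ltW.
move=> *; apply/andP; split; nra.
Qed.

Lemma autocorrelation_estimate (F : realFieldType) (T S g C c0 d e rho : F) :
  0 < c0 -> 0 <= C -> 0 <= d -> 0 <= e -> 0 <= g ->
  `|S - T * c0| <= C * (rho * c0) -> `|S - g * (d * C)| <= g * (e * C) ->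
  `|g - d * c0| <= rho * c0 ->
  `|T - d ^+ 2 * C| <= e * d * C + rho * ((1 + d + e) * C).
Proof.
move=> c00 C0 d0 e0 g0 h1 h2 h3.
rewrite -(ler_pM2r c00) -[X in _ * X <= _](gtr0_norm c00) -normrM ler_norml.
move: h1 h2 h3; rewrite !ler_norml => /andP[h1 h1'] /andP[h2 h2'] /andP[h3 h3'].
have dC : 0 <= d * C by exact: mulr_ge0.
have eC : 0 <= e * C by exact: mulr_ge0.
have p1 : (g - d * c0) * (d * C) <= rho * c0 * (d * C) by exact: ler_wpM2r.
have p2 : - (rho * c0) * (d * C) <= (g - d * c0) * (d * C) by exact: ler_wpM2r.
have p3 : g * (e * C) <= (d * c0 + rho * c0) * (e * C) by apply: ler_wpM2r => //; lra.
rewrite expr2; apply/andP; split; nra.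
Qed.

Lemma dist_mean_le (F : realFieldType) (d T C e : F) : 0 < d -> 0 < C ->
  `|T - d ^+ 2 * C| <= e * d * C -> `|d - T / d / C| <= e.
Proof.
move=> d0 C0 H; have dC : 0 < d * C by exact: mulr_gt0.
have -> : d - T / d / C = - (T - d ^+ 2 * C) / (d * C).
  by field; rewrite !lt0r_neq0.
by rewrite normrM normrN normfV (gtr0_norm dC) ler_pdivrMr // mulrA.
Qed.

Lemma ler_dist_divr (F : realFieldType) (x y e c : F) : 0 < c ->
  (`|x / c - y| <= e) = (`|x - y * c| <= e * c).
Proof.
move=> c0; rewrite -(ler_pM2r c0) -[X in _ * X <= _](gtr0_norm c0) -normrM mulrBl.
by rewrite mulfVK ?gt_eqF.
Qed.

Lemma near_pinfty_ge1 (R : realType) (P : R -> Prop) :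
  (\forall r \near +oo, P r) -> exists2 R0 : R, 1 <= R0 & forall r, R0 <= r -> P r.
Proof.
move=> [M [_ HM]]; exists (Num.max (M + 1) 1) => [|r]; first by rewrite le_max lexx orbT.
by rewrite ge_max => /andP[Mr _]; apply: HM; lra.
Qed.

Section Counting.
Variable n : nat.
Local Notation Z := 'rV[int]_n.
Implicit Types A B : set Z.

Lemma cardZ_setID A B : finite_set A ->
  cardZ A = (cardZ (A `&` B) + cardZ (A `&` ~` B))%N.
Proof. by move=> fA; rewrite /cardZ (fsbigID B). Qed.

Lemma cardZ_subset A B : finite_set B -> A `<=` B -> (cardZ A <= cardZ B)%N.
Proof. by move=> fB AB; rewrite (cardZ_setID A fB) (setIidr AB) leq_addr. Qed.

Lemma cardZ_setU A B : finite_set A -> finite_set B ->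
  (cardZ (A `|` B) <= cardZ A + cardZ B)%N.
Proof.
move=> fA fB; have fAB : finite_set (A `|` B) by rewrite finite_setU.
rewrite (cardZ_setID A fAB) leq_add //; apply: cardZ_subset => //.
by move=> x [[]].
Qed.

Lemma cardZ_setI_setC A B : finite_set A -> B `<=` A ->
  cardZ (A `&` ~` B) = (cardZ A - cardZ B)%N.
Proof. by move=> fA BA; rewrite (cardZ_setID B fA) (setIidr BA) addKn. Qed.

Lemma cardZ_translate A w : cardZ (translate A w) = cardZ A.
Proof. by rewrite /cardZ fsbig_image // => x y _ _ /addIr. Qed.

Lemma cardZ_setI_mkcond A B :
  cardZ (A `&` B) = (\sum_(i \in A) (if i \in B then 1 else 0))%N.
Proof. by rewrite /cardZ fsbig_mkcondr. Qed.

Lemma leq_fsum (I : choiceType) (P : set I) (F G : I -> nat) : finite_set P ->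
  (forall i, P i -> F i <= G i)%N -> (\sum_(i \in P) F i <= \sum_(i \in P) G i)%N.
Proof.
move=> fP FG; rewrite !fsbig_finite //= big_seq [X in (_ <= X)%N]big_seq.
by apply: leq_sum => i; rewrite in_fset_set // inE; exact: FG.
Qed.

Variable R : realType.

Lemma ler_fsum (I : choiceType) (P : set I) (F G : I -> R) : finite_set P ->
  (forall i, P i -> F i <= G i) -> \sum_(i \in P) F i <= \sum_(i \in P) G i.
Proof.
move=> fP FG; rewrite !fsbig_finite //= big_seq [X in _ <= X]big_seq.
by apply: ler_sum => i; rewrite in_fset_set // inE; exact: FG.
Qed.

Lemma fsumr_const (P : set Z) (c : R) : finite_set P ->
  \sum_(i \in P) c = (cardZ P)%:R * c.
Proof.
move=> fP; rewrite /cardZ !fsbig_finite //= natr_sum mulr_suml.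
by apply: eq_bigr => *; rewrite mul1r.
Qed.

Lemma natr_fsum (I : choiceType) (P : set I) (F : I -> nat) : finite_set P ->
  ((\sum_(i \in P) F i)%N)%:R = \sum_(i \in P) ((F i)%:R : R).
Proof. by move=> fP; rewrite !fsbig_finite //= natr_sum. Qed.

(* Also for infinite [B], whose [cardZ] is [0]. *)
Lemma cardZ_ratio_le1 A B : (cardZ (A `&` B))%:R / (cardZ B)%:R <= 1 :> R.
Proof.
have [fB|infB] := pselect (finite_set B).
  have [->|B0] := posnP (cardZ B); first by rewrite invr0 mulr0.
  by rewrite ler_pdivrMr ?ltr0n // mul1r ler_nat cardZ_subset //; exact: subIsetr.
suff -> : cardZ B = 0%N by rewrite invr0 mulr0.
rewrite /cardZ fsbig_dflt //; apply: contra_not infB; apply: sub_finite_set.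
by move=> x Bx; split.
Qed.

Lemma translateI (A B : set Z) v :
  translate A v `&` translate B v = translate (A `&` B) v.
Proof.
apply/seteqP; split => x.
  by case=> -[a Aa <-] [b Bb /addIr eab]; exists a => //; split => //; rewrite -eab.
by case=> a [Aa Ba] <-; split; exists a.
Qed.

Lemma translateE (A : set Z) w : translate A w = [set x | A (x - w)].
Proof.
apply/seteqP; split => x /=; first by case=> g Ag <-; rewrite addrK.
by move=> Axw; exists (x - w) => //; rewrite subrK.
Qed.

Lemma translateK (A : set Z) w : translate (translate A (- w)) w = A.
Proof. by rewrite !translateE; apply/seteqP; split => x /=; rewrite opprK subrK. Qed.

Lemma symdiff_setI_translate (G : set Z) v w :
  symdiff (translate (G `&` translate G (- v)) w) (G `&` translate G (- v)) `<=`
  symdiff (translate G w) G `|` translate (symdiff (translate G w) G) (- v).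
Proof.
rewrite /symdiff !translateE => u /=; rewrite !opprK [u - w + v]addrAC.
case=> -[[Gw Gwv] nG]; [have [Gu|] := pselect (G u) | have [Gw'|] := pselect (G (u - w))].
- by right; left; split => // Guv; apply: nG.
- by left; left.
- by right; right; split => // Guv; apply: nG.
- by left; right.
Qed.

Lemma fsum_dist_le (P : set Z) (F G : Z -> R) (c : R) : finite_set P ->
  (forall i, P i -> `|F i - G i| <= c) ->
  `|\sum_(i \in P) F i - \sum_(i \in P) G i| <= (cardZ P)%:R * c.
Proof.
move=> fP FG; rewrite -fsumr_const // !fsbig_finite //= -sumrB.
apply: le_trans (ler_norm_sum _ _ _) _; rewrite big_seq [X in _ <= X]big_seq.
by apply: ler_sum => i; rewrite in_fset_set // inE; exact: FG.
Qed.

End Counting.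

Section Density.
Variables (R : realType) (n : nat).
Local Notation Z := 'rV[int]_n.

Definition intrv (y : Z) : 'rV[R]_n := \row_i (y ord0 i)%:~R.

(* [cube y k] has side [2k - 1]: it is the sup-norm ball [B(y, k)]. *)
Definition cube (y : Z) (k : nat) : set Z := ZB (intrv y) k%:R.

Definition vol (k : nat) : R := (cardZ (cube 0 k))%:R.

Lemma intrvD y w : intrv (y + w) = intrv y + intrv w.
Proof. by apply/rowP => i; rewrite !mxE rmorphD. Qed.

Lemma cubeP y k w : cube y k w <-> forall i, `|y ord0 i - w ord0 i| < k%:Z.
Proof.
rewrite /cube /ZB /intrv -[k%:R]/((k%:Z)%:~R : R).
by split=> H i; have := H i; rewrite mxE -rmorphB /= -intr_norm ltr_int.
Qed.

Lemma ZB_translate (x : 'rV[R]_n) r w : ZB (x + intrv w) r = translate (ZB x r) w.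
Proof.
apply/seteqP; split => v.
  move=> H; exists (v - w); last by rewrite subrK.
  by move=> i; have := H i; rewrite !mxE rmorphB /= opprB addrA addrAC.
case=> g Hg <- i; have := Hg i.
by rewrite !mxE rmorphD /= opprD addrA addrAC addrK.
Qed.

Lemma cardZ_ZB_translate (x : 'rV[R]_n) r w :
  cardZ (ZB (x + intrv w) r) = cardZ (ZB x r).
Proof. by rewrite ZB_translate cardZ_translate. Qed.

Lemma cardZ_translate_setI_ZB (S : set Z) v (x : 'rV[R]_n) r :
  cardZ (translate S (- v) `&` ZB x r) = cardZ (S `&` ZB (x + intrv v) r).
Proof.
by rewrite ZB_translate -[S in RHS](translateK S v) translateI cardZ_translate.
Qed.

Lemma cubeD y v k : cube (y + v) k = translate (cube y k) v.
Proof. by rewrite /cube intrvD ZB_translate. Qed.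

Lemma cube_translate0 y k : cube y k = translate (cube 0 k) y.
Proof. by rewrite -cubeD add0r. Qed.

Lemma cube_sym a k z : cube a k z <-> cube z k a.
Proof. by split=> /cubeP H; apply/cubeP => i; rewrite distrC. Qed.

Lemma cube_subset y k K : (k <= K)%N -> cube y k `<=` cube y K.
Proof.
move=> kK w /cubeP H; apply/cubeP => i.
by apply: (lt_le_trans (H i)); rewrite lez_nat.
Qed.

Lemma cube_trans y z a k K : cube y K z -> cube z k a -> cube y (K + k) a.
Proof.
move=> /cubeP Hz /cubeP Ha; apply/cubeP => i.
have := Ha i; have := Hz i; have := ler_distD (z ord0 i) (y ord0 i) (a ord0 i).
rewrite PoszD; lia.
Qed.

Lemma cube_nest y a k K : (k <= K)%N -> cube y (K - k) a -> cube a k `<=` cube y K.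
Proof. by move=> kK ya z /(cube_trans ya); rewrite subnK. Qed.

Definition cube_coord k (f : {ffun 'I_n -> 'I_(2 * k).+1}) : Z :=
  \row_i ((f i : nat)%:Z - k%:Z).

Lemma cube_coord_inj k : injective (@cube_coord k).
Proof.
move=> f g /(congr1 (fun v : Z => v ord0 _)) H; apply/ffunP => i; apply/val_inj.
by have /eqP := H i; rewrite !mxE (inj_eq (addIr _)) eqz_nat => /eqP.
Qed.

Lemma cube0_image k : cube 0 k.+1 = cube_coord (k := k) @` setT.
Proof.
apply/seteqP; split => w.
  move/cubeP => H; have {}H i : (0 <= w ord0 i + k%:Z < (2 * k).+1%:Z)%R.
    by have := H i; rewrite mxE; lia.
  exists [ffun i => inord (absz (w ord0 i + k%:Z))] => //.
  apply/rowP => i; rewrite /cube_coord !mxE ffunE inordK; last by have := H i; lia.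
  by have := H i; rewrite (ord1 ord0); lia.
case=> f _ <-; apply/cubeP => i; rewrite /cube_coord !mxE.
by have := ltn_ord (f i); lia.
Qed.

Lemma cardZ_cube0 k : cardZ (cube 0 k.+1) = ((2 * k).+1 ^ n)%N.
Proof.
rewrite cube0_image /cardZ fsbig_image; last by move=> f g _ _ /cube_coord_inj.
transitivity #|{ffun 'I_n -> 'I_(2 * k).+1}|; last by rewrite card_ffun !card_ord.
rewrite -sum1_card -big_enum /=.
rewrite (fsbig_seq _ _ (enum_uniq _)); apply: eq_fsbigl.
by apply/seteqP; split => x //= _; rewrite mem_enum.
Qed.

Lemma finite_cube y k : finite_set (cube y k).
Proof.
rewrite cube_translate0; apply/finite_image/(@sub_finite_set _ _ (cube 0 k.+1)).
  exact: cube_subset.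
by rewrite cube0_image; apply/finite_image/finite_finset.
Qed.

Lemma vol_cube y k : (cardZ (cube y k))%:R = vol k.
Proof. by rewrite cube_translate0 cardZ_translate. Qed.

Lemma vol_ge0 k : 0 <= vol k.
Proof. exact: ler0n. Qed.

Lemma vol_gt0 k : (0 < k)%N -> 0 < vol k.
Proof. by case: k => // k _; rewrite /vol cardZ_cube0 ltr0n expn_gt0. Qed.

Lemma vol_le k K : (k <= K)%N -> vol k <= vol K.
Proof.
move=> kK; rewrite ler_nat.
by apply: cardZ_subset; [exact: finite_cube | exact: cube_subset].
Qed.

Lemma vol_shift_le s (eta : R) : 0 < eta ->
  exists K, forall k, (K <= k)%N -> vol (k + s) <= (1 + eta) * vol k.
Proof.
move=> eta0; have [T xT] : exists T : nat, (2 * s)%:R * 2 ^+ n / eta < T%:R :> R.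
  by exists (Num.truncn ((2 * s)%:R * 2 ^+ n / eta)).+1; exact: truncnS_gt.
exists (T + s).+1 => -[//|j] Hj; rewrite addSn /vol !cardZ_cube0 !natrX.
have -> : (2 * (j + s)).+1%:R = (2 * j).+1%:R + (2 * s)%:R :> R.
  by rewrite -natrD; congr _%:R; lia.
apply: expr_shift_le; rewrite ?ltr0n ?ler0n ?ler_nat //; first lia.
rewrite -ler_pdivrMl // mulrC; apply/ltW/(lt_le_trans xT).
by rewrite ler_nat; lia.
Qed.

Definition has_dense_almost_periods (A : set Z) : Prop :=
  forall eps : R, 0 < eps ->
    exists Reps : R, 0 < Reps /\
    exists N : set Z, rel_dense R N /\
      forall (r : R) (v : Z), Reps <= r -> N v ->
        Dplus (symdiff (translate A v) A) r < eps.

Definition cube_count (A : set Z) (y : Z) (k : nat) : R := (cardZ (A `&` cube y k))%:R.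

Lemma cube_count_ge0 A y k : 0 <= cube_count A y k.
Proof. exact: ler0n. Qed.

Lemma cube_count_le_vol A y k : cube_count A y k <= vol k.
Proof.
rewrite -(vol_cube y) ler_nat.
by apply: cardZ_subset; [exact: finite_cube | exact: subIsetr].
Qed.

Lemma ratio_le_Dplus (S : set Z) (x : 'rV[R]_n) r :
  (cardZ (S `&` ZB x r))%:R / (cardZ (ZB x r))%:R <= Dplus S r.
Proof.
apply: sup_upper_bound; last by exists x.
split; first by eexists; exists x.
by exists 1 => _ [y _ <-]; exact: cardZ_ratio_le1.
Qed.

Lemma Dplus_le (S : set Z) r b :
  (forall x : 'rV[R]_n, (cardZ (S `&` ZB x r))%:R / (cardZ (ZB x r))%:R <= b) ->
  Dplus S r <= b.
Proof. by move=> Sb; apply: ge_sup => [|_ [x _ <-]]; [eexists; exists 0 | exact: Sb]. Qed.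

Lemma cube_count_translate_le A y v k :
  cube_count A (y + v) k <=
  cube_count A y k + (cardZ (symdiff (translate A v) A `&` cube (y + v) k))%:R.
Proof.
rewrite /cube_count -natrD ler_nat; set C := cube (y + v) k.
have fC B : finite_set (B `&` C) by apply: finite_setIr; exact: finite_cube.
have -> : cardZ (A `&` cube y k) = cardZ (translate A v `&` C).
  by rewrite /C cubeD translateI cardZ_translate.
apply: leq_trans (cardZ_setU (fC _) (fC _)); apply: cardZ_subset.
  by rewrite -setIUl; exact: fC.
move=> w [Aw Cw]; have [Tw|Tw] := pselect (translate A v w).
  by left.
by right; split => //; right.
Qed.

Lemma cube_count_shift_le A z w s k : (s <= k)%N -> cube z (k - s) `<=` cube w k ->
  cube_count A z k <= cube_count A w k + (vol k - vol (k - s)).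
Proof.
move=> sk zw; have fz := finite_cube z k.
have sub : cube z (k - s) `<=` cube z k by exact/cube_subset/leq_subr.
rewrite /cube_count -(vol_cube z k) -(vol_cube z (k - s)) -natrB ?cardZ_subset //.
rewrite -natrD ler_nat -cardZ_setI_setC //.
rewrite (cardZ_setID (cube z (k - s)) (finite_setIr A fz)) leq_add //.
  apply: cardZ_subset; first by apply: finite_setIr; exact: finite_cube.
  by move=> x [[Ax _] /zw].
apply: cardZ_subset; first by apply: finite_setIl.
by move=> x [[_ ?] ?].
Qed.

Lemma cube_count_oscillation A : has_dense_almost_periods A ->
  forall eps : R, 0 < eps -> exists K, forall k, (K <= k)%N ->
  forall y z, cube_count A z k <= cube_count A y k + eps * vol k.
Proof.
move=> HA eps e0; have e2 : 0 < eps / 2 by lra.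
have [Reps [Re0 [N [[R0 [R00 HN]] HD]]]] := HA _ e2.
have [s R0s] : exists s : nat, R0 <= s%:R.
  by exists (Num.truncn R0).+1; exact/ltW/truncnS_gt.
have [t Rt] : exists t : nat, Reps <= t%:R.
  by exists (Num.truncn Reps).+1; exact/ltW/truncnS_gt.
have [K1 HK1] := vol_shift_le s e2.
exists (K1 + s + t).+1 => k Hk y z.
have [v [Nv Hv]] := HN (intrv (z - y)) s%:R R0s.
have yvz : cube (y + v) s z.
  have /cubeP {}Hv : cube (z - y) s v := Hv.
  by apply/cubeP => i; rewrite distrC; have := Hv i; rewrite !mxE opprD addrA.
have sk : (s <= k)%N by lia.
have zyv : cube z (k - s) `<=` cube (y + v) k.
  by move=> w /(cube_trans yvz); rewrite subnKC.
apply: (le_trans (cube_count_shift_le A sk zyv)).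
apply: (le_trans (lerD (cube_count_translate_le A y v k) (lexx _))).
rewrite -addrA lerD2l; set D := symdiff (translate A v) A.
have vk : 0 < vol k by apply: vol_gt0; lia.
have Dk : (cardZ (D `&` cube (y + v) k))%:R <= eps / 2 * vol k.
  rewrite -ler_pdivrMr // -(vol_cube (y + v)); apply/ltW.
  apply: (le_lt_trans (ratio_le_Dplus D _ _)); apply: HD => //.
  by apply: (le_trans Rt); rewrite ler_nat; lia.
have volk : vol k - vol (k - s) <= eps / 2 * vol k.
  have := HK1 (k - s)%N ltac:(lia); rewrite subnK //.
  have := vol_le (leq_subr s k); have := vol_ge0 (k - s); nra.
lra.
Qed.

(* Both sides count the pairs [(z, a)] with [z] in [cube y K], [a] in [A]
   and [cube z k a]. *)
Lemma sum_cardZ_cube_exchange (A : set Z) y k K :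
  (\sum_(z \in cube y K) cardZ (A `&` cube z k) =
   \sum_(a \in cube y (K + k)) (if a \in A then cardZ (cube y K `&` cube a k) else 0))%N.
Proof.
have fK := finite_cube y K; have fKk := finite_cube y (K + k).
transitivity (\sum_(z \in cube y K) \sum_(a \in cube y (K + k))
    (if a \in A `&` cube z k then 1 else 0))%N.
  apply: eq_fsbigr => z /set_mem yz; rewrite -cardZ_setI_mkcond.
  congr cardZ; apply/seteqP; split => a; last by case.
  by move=> [Aa za]; split => //; exact: cube_trans yz za.
rewrite exchange_fsbig //; apply: eq_fsbigr => a _.
have [Aa|nAa] := boolP (a \in A); last first.
  by rewrite fsbig1 // => z _; rewrite in_setI (negbTE nAa).
rewrite cardZ_setI_mkcond; apply: eq_fsbigr => z _; rewrite in_setI Aa /=.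
by congr (if _ then _ else _); apply/idP/idP => /set_mem/cube_sym/mem_set.
Qed.

Lemma sum_cube_count_le A y k K :
  \sum_(z \in cube y K) cube_count A z k <= vol k * cube_count A y (K + k).
Proof.
rewrite /cube_count -natr_fsum; last exact: finite_cube.
rewrite sum_cardZ_cube_exchange -(vol_cube y k) -natrM ler_nat setIC.
rewrite cardZ_setI_mkcond (fsbig_distrr _ _ _ (finite_cube _ _)) /=.
apply: leq_fsum; first exact: finite_cube.
move=> a _; case: ifP => _; last by rewrite muln0.
rewrite muln1 -(ler_nat R) (vol_cube y) -(vol_cube a) ler_nat.
by apply: cardZ_subset; [exact: finite_cube | exact: subIsetr].
Qed.

Lemma sum_cube_count_ge A y k K : (k <= K)%N ->
  vol k * cube_count A y (K - k) <= \sum_(z \in cube y K) cube_count A z k.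
Proof.
move=> kK; rewrite /cube_count -natr_fsum; last exact: finite_cube.
rewrite sum_cardZ_cube_exchange -(vol_cube y k) -natrM ler_nat.
have sub : A `&` cube y (K - k) `<=` cube y (K + k).
  by move=> a [_ ya]; apply: cube_subset ya; lia.
rewrite -(setIidr sub) cardZ_setI_mkcond (fsbig_distrr _ _ _ (finite_cube _ _)) /=.
apply: leq_fsum; first exact: finite_cube.
move=> a _; have [|] := boolP (a \in _); last by rewrite muln0.
rewrite in_setI => /andP[-> /set_mem ya]; rewrite muln1.
by rewrite (setIidr (cube_nest kK ya)) -(ler_nat R) (vol_cube y) (vol_cube a).
Qed.

Section AtScale.
Variables (A : set Z) (k : nat) (eps : R).
Hypothesis osc : forall y z, cube_count A z k <= cube_count A y k + eps * vol k.

Lemma cube_count_le_of_oscillation y K :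
  vol k * cube_count A y K <= vol (K + k) * (cube_count A 0 k + eps * vol k).
Proof.
have := sum_cube_count_ge A y (leq_addl K k); rewrite addnK => /le_trans; apply.
rewrite -(vol_cube y (K + k)) -fsumr_const; last exact: finite_cube.
by apply: ler_fsum => [|z _]; [exact: finite_cube | exact: osc].
Qed.

Lemma cube_count_ge_of_oscillation y K : (k <= K)%N ->
  vol (K - k) * (cube_count A 0 k - eps * vol k) <= vol k * cube_count A y K.
Proof.
move=> kK; have := sum_cube_count_le A y k (K - k); rewrite subnK //; apply: le_trans.
rewrite -(vol_cube y (K - k)) -fsumr_const; last exact: finite_cube.
apply: ler_fsum => [|z _]; first exact: finite_cube.
by have := osc z 0; lra.
Qed.

End AtScale.

Lemma cube_count_near A : has_dense_almost_periods A ->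
  forall e : R, 0 < e -> exists k M, forall K y, (M <= K)%N ->
    `|cube_count A y K - cube_count A 0 k / vol k * vol K| <= 3 * e * vol K.
Proof.
move=> HA e e0; wlog e1 : e e0 / e <= 1.
  move=> near1; have [|e1] := lerP e 1; first exact: near1.
  have [k [M HM]] := near1 1 ltr01 (lexx 1); exists k, M => K y /HM/le_trans; apply.
  by rewrite ler_wpM2r ?vol_ge0 // ler_wpM2l // ltW.
have [K0 osc] := cube_count_oscillation HA e0.
set k := K0.+1; have {osc}osc := osc k (leqnSn K0).
have [K1 HK1] := vol_shift_le k e0.
exists k, (K1 + k + k)%N => K y HK.
have vk : 0 < vol k by exact: vol_gt0.
set a := cube_count A 0 k / vol k.
have ca : cube_count A 0 k = a * vol k by rewrite mulfVK ?gt_eqF.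
have hi := cube_count_le_of_oscillation osc y K.
have kK : (k <= K)%N by lia.
have lo := cube_count_ge_of_oscillation osc y kK.
rewrite ca -mulrDl mulrA [vol k * _]mulrC ler_pM2r // in hi.
rewrite ca -mulrBl mulrA [vol k * _]mulrC ler_pM2r // in lo.
apply: (scaled_sandwich_dist_le _ _ _ _ _ _ hi lo).
- by rewrite divr_ge0 ?cube_count_ge0 ?vol_ge0 // ler_pdivrMr // mul1r cube_count_le_vol.
- by rewrite e1 ltW.
- exact: vol_ge0.
- exact/vol_le/leq_subr.
- by have := HK1 (K - k)%N ltac:(lia); rewrite subnK.
- by apply: HK1; lia.
Qed.

Lemma cube_ratio_near A : has_dense_almost_periods A ->
  forall e : R, 0 < e -> exists k M, forall K y, (M <= K)%N ->
    `|cube_count A y K / vol K - cube_count A 0 k / vol k| <= 3 * e.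
Proof.
move=> HA e e0; have [k [M HM]] := cube_count_near HA e0.
exists k, (maxn M 1) => K y HK; have vK : 0 < vol K by apply: vol_gt0; lia.
by rewrite ler_dist_divr //; apply: HM; lia.
Qed.

Lemma cvgn_cube_ratio A : has_dense_almost_periods A ->
  cvgn (fun k => cube_count A 0 k / vol k).
Proof.
move=> HA; apply/cauchy_cvgP/cauchy_exP => e e0.
have e6 : 0 < e / 6 by lra.
have [k [M HM]] := cube_ratio_near HA e6.
exists (cube_count A 0 k / vol k), M => // K /(HM K 0).
by rewrite /ball /= distrC => /le_lt_trans; apply; lra.
Qed.

Lemma cube_uniform_density A : has_dense_almost_periods A ->
  exists2 d : R, 0 <= d <= 1 & forall eps, 0 < eps -> exists M, forall K y,
    (M <= K)%N -> `|cube_count A y K - d * vol K| <= eps * vol K.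
Proof.
move=> HA; pose a k := cube_count A 0 k / vol k.
have cva : cvgn a := cvgn_cube_ratio HA.
exists (limn a).
  apply/andP; split; [apply: limr_ge | apply: limr_le] => //; apply: nearW => k.
  - by rewrite divr_ge0 ?cube_count_ge0 ?vol_ge0.
  - exact: cardZ_ratio_le1.
move=> eps eps0; have e0 : 0 < eps / 7 by lra.
have [k [M HM]] := cube_ratio_near HA e0.
have /cvgrPdist_le/(_ _ e0)[M' _ HM'] := cva.
exists (maxn (maxn M M') 1) => K y HK; have vK : 0 < vol K by apply: vol_gt0; lia.
rewrite -ler_dist_divr //.
have h1 := HM K y ltac:(lia); have h2 := HM K 0 ltac:(lia).
have h3 : `|limn a - a K| <= eps / 7 by apply: HM'; rewrite /=; lia.
move: h1 h2 h3; rewrite /a; set p := cube_count A y K / vol K.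
set q := cube_count A 0 K / vol K; set r := cube_count A 0 k / vol k.
rewrite !ler_norml => /andP[? ?] /andP[? ?] /andP[? ?]; apply/andP; split; lra.
Qed.

Definition floorv (x : 'rV[R]_n) : Z := \row_i Num.floor (x ord0 i).

Lemma floorv_dist (x : 'rV[R]_n) i : `|x ord0 i - (floorv x ord0 i)%:~R| < 1.
Proof.
rewrite mxE; have /andP[h1 h2] := floor_itv (x ord0 i).
by rewrite rmorphD /= in h2; rewrite ger0_norm; lra.
Qed.

Lemma ZB_sub_cube (x : 'rV[R]_n) r : ZB x r `<=` cube (floorv x) (Num.truncn r).+2.
Proof.
move=> w Hw; apply/cubeP => i; rewrite -(ltr_int R) intr_norm rmorphB /=.
have := ler_distD (x ord0 i) (floorv x ord0 i)%:~R (w ord0 i)%:~R.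
have fx := floorv_dist x i; rewrite distrC in fx.
have := Hw i; have := truncnS_gt r.
rewrite -[(_ .+2)%:Z%:~R]/((Num.truncn r).+2%:R) !mulrSr; lra.
Qed.

Lemma cube_sub_ZB (x : 'rV[R]_n) r : cube (floorv x) (Num.truncn r).-1 `<=` ZB x r.
Proof.
move=> w /cubeP Hw i; have := Hw i.
case Er: (Num.truncn r) => [|j] /=; first by rewrite normr_lt0.
have r1 : 1 <= r by rewrite -truncn_gt0 Er.
have rj : j.+1%:R <= r by rewrite -Er truncn_le; lra.
rewrite -(ltr_int R) intr_norm rmorphB /= -[(j%:Z)%:~R]/(j%:R).
have := ler_distD (floorv x ord0 i)%:~R (x ord0 i) (w ord0 i)%:~R.
by have := floorv_dist x i; move: rj; rewrite mulrSr; lra.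
Qed.

Lemma finite_ZB (x : 'rV[R]_n) r : finite_set (ZB x r).
Proof. exact: sub_finite_set (@ZB_sub_cube x r) (finite_cube _ _). Qed.

Lemma cardZ_ZB_gt0 (x : 'rV[R]_n) r : 1 <= r -> (0 < cardZ (ZB x r))%N.
Proof.
move=> r1; apply: (@leq_trans (cardZ [set floorv x])).
  by rewrite /cardZ fsbig_set1.
apply: cardZ_subset; first exact: finite_ZB.
by move=> _ -> i; exact: lt_le_trans (floorv_dist x i) r1.
Qed.

Definition uniform_density (A : set Z) (d : R) : Prop :=
  forall eps : R, 0 < eps -> \forall r \near +oo, forall x : 'rV[R]_n,
    `|(cardZ (A `&` ZB x r))%:R - d * (cardZ (ZB x r))%:R| <= eps * (cardZ (ZB x r))%:R.

Lemma uniform_density_of_cubes (A : set Z) (d : R) : 0 <= d <= 1 ->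
  (forall eps, 0 < eps -> exists M, forall K y, (M <= K)%N ->
    `|cube_count A y K - d * vol K| <= eps * vol K) ->
  uniform_density A d.
Proof.
move=> d01 Hd eps eps0; set e := Num.min (eps / 3) 1.
have e0 : 0 < e by rewrite lt_min ltr01 andbT; lra.
have e01 : 0 <= e <= 1 by rewrite ltW //= ge_min lexx orbT.
have e3 : e <= eps / 3 by rewrite ge_min lexx.
have [M HM] := Hd e e0; have [K1 HK1] := vol_shift_le 3 e0.
exists (M + K1 + 3)%:R; split; first exact: num_real.
move=> r /ltW hr x.
have hk : (M + K1 + 2 < Num.truncn r)%N.
  by rewrite truncn_gt_nat; apply: le_trans hr; rewrite ler_nat; lia.
have cardZ_le B B' : B `<=` B' -> finite_set B' -> (cardZ B)%:R <= (cardZ B')%:R :> R.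
  by move=> BB' fB'; rewrite ler_nat cardZ_subset.
apply: (@le_trans _ _ (3 * e * (cardZ (ZB x r))%:R)); last first.
  by rewrite ler_wpM2r // ?ler0n //; lra.
apply: (sandwich_dist_le d01 e01 _ _ _ _ _ _
  (HM (Num.truncn r).-1 (floorv x) _) (HM (Num.truncn r).+2 (floorv x) _)).
- by apply: vol_gt0; lia.
- rewrite -(vol_cube (floorv x)); apply: cardZ_le; last exact: finite_ZB.
  exact: cube_sub_ZB.
- rewrite -(vol_cube (floorv x)); apply: cardZ_le; last exact: finite_cube.
  exact: ZB_sub_cube.
- have -> : (Num.truncn r).+2 = ((Num.truncn r).-1 + 3)%N by lia.
  by apply: HK1; lia.
- apply: cardZ_le; last exact/finite_setIr/finite_ZB.
  by move=> w [Aw /cube_sub_ZB]; split.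
- apply: cardZ_le; last exact/finite_setIr/finite_cube.
  by move=> w [Aw /ZB_sub_cube]; split.
- by lia.
- by lia.
Qed.

Lemma uniform_density_dens (A : set Z) (d : R) : uniform_density A d -> dens R A = d.
Proof.
move=> Hd; apply: cvg_lim => //; apply/cvgrPdist_le => eps e0.
apply: filterS2 (Hd eps e0) (nbhs_pinfty_ge (num_real 1)) => r /(_ 0) Hr r1.
have c0 : 0 < (cardZ (ZB (0 : 'rV[R]_n) r))%:R :> R by rewrite ltr0n cardZ_ZB_gt0.
by rewrite distrC ler_dist_divr.
Qed.

Lemma has_dense_almost_periods_setI_translate (G : set Z) v :
  has_dense_almost_periods G -> has_dense_almost_periods (G `&` translate G (- v)).
Proof.
move=> HG eps e0; have e2 : 0 < eps / 2 by lra.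
have [Reps [Re0 [N [HN HD]]]] := HG _ e2.
exists Reps; split => //; exists N; split => // r w hr Nw.
set D := symdiff (translate G w) G.
apply: (@le_lt_trans _ _ (Dplus D r + Dplus D r)); last by have := HD r w hr Nw; lra.
apply: Dplus_le => x.
apply: le_trans (lerD (ratio_le_Dplus D x r) (ratio_le_Dplus D (x + intrv v) r)).
rewrite cardZ_ZB_translate -mulrDl ler_wpM2r ?invr_ge0 // -natrD ler_nat.
rewrite -cardZ_translate_setI_ZB; apply: leq_trans (cardZ_setU _ _).
- apply: cardZ_subset; first by rewrite -setIUl; apply: finite_setIr; exact: finite_ZB.
  by move=> u [/symdiff_setI_translate Du Bu]; rewrite -setIUl.
- exact/finite_setIr/finite_ZB.
- exact/finite_setIr/finite_ZB.
Qed.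

Lemma sum_cardZ_autocorrelation_exchange (G P : set Z) (x : 'rV[R]_n) r :
  finite_set P ->
  (\sum_(v \in ZB x r) cardZ ((G `&` translate G (- v)) `&` P) =
   \sum_(y \in G `&` P) cardZ (G `&` ZB (x + intrv y) r))%N.
Proof.
move=> fP; have fB := finite_ZB x r.
transitivity (\sum_(v \in ZB x r) \sum_(y \in P)
    (if y \in G `&` translate G (- v) then 1 else 0))%N.
  by apply: eq_fsbigr => v _; rewrite setIC cardZ_setI_mkcond.
rewrite exchange_fsbig // [G `&` P]setIC fsbig_mkcondr; apply: eq_fsbigr => y _.
have [Gy|nGy] := boolP (y \in G); last first.
  by rewrite fsbig1 // => v _; rewrite in_setI (negbTE nGy).
rewrite -cardZ_setI_mkcond -cardZ_translate_setI_ZB setIC; congr (cardZ (_ `&` _)).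
apply/seteqP; split => v /=; rewrite !translateE /= !opprK addrC.
  by case.
by move=> Gyv; split => //; apply/set_mem.
Qed.

Lemma dens_uniform (A : set Z) : has_dense_almost_periods A ->
  0 <= dens R A <= 1 /\ uniform_density A (dens R A).
Proof.
move=> HA; have [d d01 Hd] := cube_uniform_density HA.
have {}Hd := uniform_density_of_cubes d01 Hd.
by rewrite (uniform_density_dens Hd).
Qed.

Lemma sum_dens_autocorrelation (G : set Z) (d e : R) (x : 'rV[R]_n) r :
  has_dense_almost_periods G -> uniform_density G d -> 0 <= d -> 0 <= e ->
  (forall y, `|(cardZ (G `&` ZB (x + intrv y) r))%:R - d * (cardZ (ZB x r))%:R|
     <= e * (cardZ (ZB x r))%:R) ->
  `|\sum_(v \in ZB x r) dens R (G `&` translate G (- v)) - d ^+ 2 * (cardZ (ZB x r))%:R|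
    <= e * d * (cardZ (ZB x r))%:R.
Proof.
move=> HG Hd d0 e0 HV; set C : R := (cardZ (ZB x r))%:R.
have C0 : 0 <= C by exact: ler0n.
apply: (le_of_forall_mul_gt0 (K := (1 + d + e) * C)); first by rewrite mulr_ge0 //; lra.
move=> rho rho0; pose Gv v := G `&` translate G (- v).
have HGv v := (dens_uniform (has_dense_almost_periods_setI_translate v HG)).2.
have near_s : \forall s \near +oo,
    (forall y : 'rV[R]_n, `|(cardZ (G `&` ZB y s))%:R - d * (cardZ (ZB y s))%:R|
                 <= rho * (cardZ (ZB y s))%:R) /\
    (forall v, ZB x r v -> forall y : 'rV[R]_n,
      `|(cardZ (Gv v `&` ZB y s))%:R - dens R (Gv v) * (cardZ (ZB y s))%:R|
        <= rho * (cardZ (ZB y s))%:R).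
  near=> s; split; first by near: s; exact: Hd.
  near: s; apply: filterS (filter_bigI (D := fset_set (ZB x r)) _
    (fun v _ => HGv v rho rho0)) => s Hs v vB.
  by apply: Hs; rewrite /= in_fset_set ?inE //; exact: finite_ZB.
have [s s1 /(_ s (lexx s))[HGs HGvs]] := near_pinfty_ge1 near_s.
set c0 : R := (cardZ (ZB (0 : 'rV[R]_n) s))%:R.
have c00 : 0 < c0 by rewrite ltr0n cardZ_ZB_gt0.
have fGs : finite_set (G `&` ZB (0 : 'rV[R]_n) s) by exact/finite_setIr/finite_ZB.
pose S := \sum_(v \in ZB x r) ((cardZ (Gv v `&` ZB (0 : 'rV[R]_n) s))%:R : R).
apply: (autocorrelation_estimate (S := S) c00 C0 d0 e0 (ler0n _ _) _ _ (HGs 0)).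
  rewrite mulr_fsuml; apply: fsum_dist_le; first exact: finite_ZB.
  by move=> v vB; apply: HGvs.
rewrite /S /Gv -natr_fsum; last exact: finite_ZB.
rewrite sum_cardZ_autocorrelation_exchange; last exact: finite_ZB.
by rewrite natr_fsum // -fsumr_const //; apply: fsum_dist_le.
Unshelve. all: by end_near.
Qed.

End Density.

Theorem proposition2p8 (R : realType) (n : nat) (G : set 'rV[int]_n) :
  almost_periodic R G ->
  forall eps : R, 0 < eps ->
    exists R0 : R, 0 < R0 /\
      forall (r : R) (x : 'rV[R]_n), R0 <= r ->
        `| dens R G - (\sum_(v \in ZB x r) rho R G v) / (cardZ (ZB x r))%:R | < eps.
Proof.
move=> [_ HG] eps eps0; have [/andP[d0 _] Hd] := dens_uniform HG.
have e0 : 0 < eps / 2 by lra.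
have [R0 R01 HR0] := near_pinfty_ge1 (Hd _ e0).
exists R0; split=> [|r x rR0]; first lra.
have C0 : 0 < (cardZ (ZB x r))%:R :> R by rewrite ltr0n cardZ_ZB_gt0 // (le_trans R01).
have [dG0|dpos] := eqVneq (dens R G) 0.
  (* then every [rho R G v] is a quotient by [0], hence [0] *)
  by rewrite /rho dG0 fsbig1 ?mul0r ?subrr ?normr0 // => v _; rewrite invr0 mulr0.
have dG : 0 < dens R G by rewrite lt0r dpos.
rewrite /rho -mulr_fsuml; apply: le_lt_trans (_ : eps / 2 < eps); last lra.
apply: (dist_mean_le dG C0); apply: sum_dens_autocorrelation => //; first lra.
by move=> y; rewrite -(cardZ_ZB_translate x r y); exact: HR0.
Qed.
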